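(* Let $G$ be a unit square graph with $V(G)\neq\emptyset$. Then there is a vertex $v\in V(G)$ such that $G[N[v]]$ is a unit interval graph.
   Context: A unit square graph is a graph $G$ admitting $f\colon V(G)\to\mathbb{R}^2$ with $vw\in E(G)$ iff $\|f(v)-f(w)\|_\infty\le1$ for distinct $v,w$. $N[v]=N(v)\cup\{v\}$ is the closed neighborhood. A unit interval graph is an intersection graph of unit-length intervals on the real line. *)

From mathcomp Require Import all_boot.
From Stdlib Require Import Reals.
Set Implicit Arguments. Unset Strict Implicit. Unset Printing Implicit Defensive.

Definition simple_graph (T : finType) (e : rel T) : Prop :=
  (forall x y, e x y = e y x) /\ (forall x, e x x = false).

Definition dist_inf (p q : R * R) : R :=
  Rmax (Rabs (fst p - fst q)) (Rabs (snd p - snd q)).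

Definition unit_square_graph (T : finType) (e : rel T) : Prop :=
  exists f : T -> R * R,
    forall v w : T, v <> w -> (e v w <-> (dist_inf (f v) (f w) <= 1)%R).

(* The induced subgraph G[S] is a unit interval graph: an intersection graph
   of unit-length closed intervals [g u, g u + 1], i.e. two distinct vertices
   of S are adjacent iff |g u - g w| <= 1. *)
Definition induced_unit_interval (T : finType) (e : rel T) (S : pred T) : Prop :=
  exists g : T -> R,
    forall u w : T, S u -> S w -> u <> w ->
      (e u w <-> (Rabs (g u - g w) <= 1)%R).

Definition closed_nbhd (T : finType) (e : rel T) (v : T) : pred T :=
  fun u => (u == v) || e v u.

(* Take a vertex v whose point has the least first coordinate.  Every vertex
   of N[v] then lies in the vertical strip of width 1 to the right of v, where
   the first coordinates of any two points differ by at most 1; so adjacency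
   inside N[v] depends only on the second coordinates, which therefore give a
   unit interval representation of G[N[v]]. *)
From mathcomp Require Import all_boot.
From Stdlib Require Import Reals Lra.

Set Implicit Arguments.
Unset Strict Implicit.
Unset Printing Implicit Defensive.

Lemma exists_argmin_cons (T : eqType) (h : T -> R) (a : T) (s : seq T) :
  exists2 x, x \in a :: s & forall y, y \in a :: s -> (h x <= h y)%R.
Proof.
elim: s a => [|b s IH] a.
  by exists a => [|y /[!inE] /eqP ->]; [exact: mem_head | lra].
have [x xbs xmin] := IH b.
have mem_abs y : y \in a :: b :: s = (y == a) || (y \in b :: s) by rewrite inE.
case: (Rle_dec (h a) (h x)) => [ax | xa].
- exists a => [|y]; first exact: mem_head.
  rewrite mem_abs => /orP [/eqP -> | ybs]; first lra.
  by have := xmin y ybs; lra.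
- exists x => [|y]; first by rewrite mem_abs xbs orbT.
  rewrite mem_abs => /orP [/eqP -> | ybs]; [lra | exact: xmin].
Qed.

Lemma exists_argmin (T : finType) (h : T -> R) :
  0 < #|T| -> exists v : T, forall u, (h v <= h u)%R.
Proof.
case/card_gt0P => x0 _.
have := mem_enum T x0; case: (enum T) (mem_enum T) => [//|a s] memT _.
have [v _ vmin] := exists_argmin_cons h a s.
by exists v => u; apply: vmin; rewrite memT.
Qed.

Lemma dist_inf_le1 (p q : R * R) :
  (dist_inf p q <= 1)%R <->
  (Rabs (fst p - fst q) <= 1)%R /\ (Rabs (snd p - snd q) <= 1)%R.
Proof.
rewrite /dist_inf; split => [le1 | [le1 le2]]; last exact: Rmax_lub.
by split; apply: Rle_trans le1; [apply: Rmax_l | apply: Rmax_r].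
Qed.

Lemma dist_inf_le1_in_strip (a : R) (p q : R * R) :
  (a <= fst p <= a + 1)%R -> (a <= fst q <= a + 1)%R ->
  (dist_inf p q <= 1)%R <-> (Rabs (snd p - snd q) <= 1)%R.
Proof.
move=> pa qa; rewrite dist_inf_le1; split => [[] // | le2].
by split=> //; apply: Rabs_le; lra.
Qed.

Section UnitSquareGraph.

Variables (T : finType) (e : rel T) (f : T -> R * R).
Hypothesis e_irr : forall x, e x x = false.
Hypothesis f_repr :
  forall v w : T, v <> w -> (e v w <-> (dist_inf (f v) (f w) <= 1)%R).

Lemma closed_nbhd_leftmost_in_strip (v : T) :
  (forall u, fst (f v) <= fst (f u))%R ->
  forall u, closed_nbhd e v u -> (fst (f v) <= fst (f u) <= fst (f v) + 1)%R.
Proof.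
move=> vmin u /orP [/eqP -> | evu]; first lra.
have vu : v <> u by move=> vu; rewrite vu e_irr in evu.
have [le1 _] := proj1 (dist_inf_le1 _ _) (proj1 (f_repr vu) evu).
have := Rle_abs (fst (f u) - fst (f v)); rewrite Rabs_minus_sym.
by have := vmin u; lra.
Qed.

Lemma induced_unit_interval_in_strip (a : R) (S : pred T) :
  (forall u, S u -> a <= fst (f u) <= a + 1)%R ->
  induced_unit_interval e S.
Proof.
move=> Sa; exists (fun u => snd (f u)) => u w Su Sw uw.
by rewrite (f_repr uw); apply: dist_inf_le1_in_strip; apply: Sa.
Qed.

End UnitSquareGraph.

Theorem mainTheorem5 (T : finType) (e : rel T) :
  simple_graph e -> unit_square_graph e -> 0 < #|T| ->
  exists v : T, induced_unit_interval e (closed_nbhd e v).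
Proof.
move=> [_ e_irr] [f f_repr] T_nonempty.
have [v vmin] := exists_argmin (fun u => fst (f u)) T_nonempty.
exists v; apply: (induced_unit_interval_in_strip f_repr).
exact: closed_nbhd_leftmost_in_strip.
Qed.
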